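(* Let $P_0,P_1,P_2\in\mathbb H$ be distinct and suppose that $P_0P_1P_2$ is not equilateral (i.e. not $\langle P_0,P_1\rangle=\langle P_1,P_2\rangle=\langle P_2,P_0\rangle$). Let $\varepsilon\in\{-1,1\}$ and for $i\in\mathbb Z/3\mathbb Z$ let $$R_i:=\frac{\sqrt{1-2\langle P_{i+1},P_{i+2}\rangle}(P_{i+1}+P_{i+2})+\varepsilon P_{i+1}\tilde\times P_{i+2}}{\sqrt3(1-\langle P_{i+1},P_{i+2}\rangle)}.$$ Let $\alpha:=-1+\langle P_0,P_1\rangle+\langle P_1,P_2\rangle+\langle P_2,P_0\rangle$, $\chi:=\langle P_0\tilde\times P_1,P_2\rangle$ and $d_i:=\sqrt{1-2\langle P_{i+1},P_{i+2}\rangle}$. Then $R_0R_1R_2$ is equilateral (i.e. $\langle R_0,R_1\rangle=\langle R_1,R_2\rangle=\langle R_2,R_0\rangle$) if and only if $$\alpha(d_0+d_1+d_2-d_0d_1d_2)+\varepsilon\chi(1-d_0d_1-d_1d_2-d_2d_0)=0.$$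
   Context: $\langle v,w\rangle=-v_1w_1+v_2w_2+v_3w_3$ on $\mathbb R^3$; $\mathbb H=\{P\in\mathbb R^3:\langle P,P\rangle=-1,\ P_1\ge1\}$; $v\tilde\times w:=J(v\times w)$ with $J=\mathrm{diag}(-1,1,1)$ and $\times$ the Euclidean cross product. Indices are in $\mathbb Z/3\mathbb Z$. *)

From HB Require Import structures.
From mathcomp Require Import all_boot all_order all_algebra.
Set Implicit Arguments. Unset Strict Implicit. Unset Printing Implicit Defensive.
Import Order.TTheory GRing.Theory Num.Theory.
Local Open Scope ring_scope.

Section Lorentz.
Variable R : rcfType.

Definition Jsign (k : 'I_3) : R := if k == 0 then -1 else 1.

Definition lor (v w : 'rV[R]_3) : R := \sum_(k < 3) Jsign k * v 0 k * w 0 k.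

Definition cross (v w : 'rV[R]_3) : 'rV[R]_3 :=
  \row_(k < 3) (v 0 (k + 1) * w 0 (k + 2) - v 0 (k + 2) * w 0 (k + 1)).

Definition lcross (v w : 'rV[R]_3) : 'rV[R]_3 :=
  \row_(k < 3) (Jsign k * cross v w 0 k).

Definition inH (P : 'rV[R]_3) : Prop := lor P P = -1 /\ 1 <= P 0 0.

Definition equilateral (P : 'I_3 -> 'rV[R]_3) : Prop :=
  lor (P 0) (P 1) = lor (P 1) (P 2) /\ lor (P 1) (P 2) = lor (P 2) (P 0).

Definition dd (P : 'I_3 -> 'rV[R]_3) (i : 'I_3) : R :=
  Num.sqrt (1 - 2 * lor (P (i + 1)) (P (i + 2))).

Definition Rpt (eps : R) (P : 'I_3 -> 'rV[R]_3) (i : 'I_3) : 'rV[R]_3 :=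
  (Num.sqrt 3 * (1 - lor (P (i + 1)) (P (i + 2))))^-1 *:
   (dd P i *: (P (i + 1) + P (i + 2)) + eps *: lcross (P (i + 1)) (P (i + 2))).

Definition alpha (P : 'I_3 -> 'rV[R]_3) : R :=
  -1 + lor (P 0) (P 1) + lor (P 1) (P 2) + lor (P 2) (P 0).

Definition chi (P : 'I_3 -> 'rV[R]_3) : R := lor (lcross (P 0) (P 1)) (P 2).

End Lorentz.

From HB Require Import structures.
From mathcomp Require Import all_boot all_order all_algebra.
From mathcomp Require Import ring lra.
Import Order.TTheory GRing.Theory Num.Theory.
Set Implicit Arguments.
Unset Strict Implicit.
Unset Printing Implicit Defensive.

Local Open Scope ring_scope.

(* Write a_i := <P_(i+1), P_(i+2)>.  By the reverse Cauchy-Schwarz inequality on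
   H, a_i <= -1, so d_i is a genuine square root and a_i = (1 - d_i^2)/2.  Expanding
   with <P_i, P_i> = -1 and eps^2 = 1, the Gram entry <R_i, R_(i+1)> becomes a
   rational function of d_i, d_(i+1), d_(i+2), chi and eps alone.  The difference of
   two cyclically consecutive entries then factors as (d_i - d_(i+2)) times a
   nonzero constant times the left-hand side of the criterion; as P is not
   equilateral the d_i are not all equal, so R is equilateral iff that side vanishes. *)

Lemma ord3P (i : 'I_3) : [\/ i = 0, i = 1 | i = 2].
Proof. by case: i => -[|[|[|//]]] ?; [constructor 1|constructor 2|constructor 3]; apply/val_inj. Qed.

Lemma ord3_addE :
  ((0 + 1 : 'I_3) = 1) * ((0 + 2 : 'I_3) = 2) * ((1 + 1 : 'I_3) = 2) *
  ((1 + 2 : 'I_3) = 0) * ((2 + 1 : 'I_3) = 0) * ((2 + 2 : 'I_3) = 1).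
Proof. by do !split; apply/val_inj. Qed.

Lemma ord3_shiftE (i : 'I_3) :
  [/\ i + 1 + 1 = i + 2, i + 1 + 2 = i, i + 2 + 1 = i & i + 2 + 2 = i + 1].
Proof. by case: (ord3P i) => ->; split; apply/val_inj. Qed.

Section Algebra.
Variable R : realFieldType.

(* Inverts d = sqrt (1 - 2 a). *)
Definition side_of (d : R) : R := (1 - d ^+ 2) / 2.

Definition gram (d0 d1 d2 x e : R) : R :=
  (3 * (1 - side_of d0) * (1 - side_of d1))^-1 *
  (d0 * d1 * (-1 + side_of d0 + side_of d1 + side_of d2) + e * (d0 + d1) * x
   - side_of d2 - side_of d0 * side_of d1).

Definition defect (d0 d1 d2 x e : R) : R :=
  (-1 + side_of d0 + side_of d1 + side_of d2) * (d0 + d1 + d2 - d0 * d1 * d2)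
  + e * x * (1 - d0 * d1 - d1 * d2 - d2 * d0).

Lemma one_add_sqr_neq0 (d : R) : 1 + d ^+ 2 != 0.
Proof. by rewrite paddr_eq0 ?sqr_ge0 // oner_eq0. Qed.

Lemma gram_sub (d0 d1 d2 x e : R) :
  gram d0 d1 d2 x e - gram d1 d2 d0 x e =
  (d0 - d2) * (4 / (3 * ((1 + d0 ^+ 2) * (1 + d1 ^+ 2) * (1 + d2 ^+ 2)))) * defect d0 d1 d2 x e.
Proof.
rewrite /gram /defect /side_of.
by field; rewrite !one_add_sqr_neq0.
Qed.

Lemma defect_cycle (d0 d1 d2 x e : R) : defect d1 d2 d0 x e = defect d0 d1 d2 x e.
Proof. by rewrite /defect; ring. Qed.

Lemma gram_cycle_eq (d0 d1 d2 x e : R) : ~ (d0 = d1 /\ d1 = d2) ->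
  (gram d0 d1 d2 x e = gram d1 d2 d0 x e /\ gram d1 d2 d0 x e = gram d2 d0 d1 x e)
  <-> defect d0 d1 d2 x e = 0.
Proof.
move=> not_eq3.
set K := 4 / (3 * ((1 + d0 ^+ 2) * (1 + d1 ^+ 2) * (1 + d2 ^+ 2))).
have K_neq0 : K != 0 by rewrite /K mulf_neq0 ?invr_eq0 ?mulf_neq0 ?one_add_sqr_neq0 ?pnatr_eq0.
have E01 : gram d0 d1 d2 x e - gram d1 d2 d0 x e = (d0 - d2) * K * defect d0 d1 d2 x e.
  exact: gram_sub.
have E12 : gram d1 d2 d0 x e - gram d2 d0 d1 x e = (d1 - d0) * K * defect d0 d1 d2 x e.
  by rewrite gram_sub defect_cycle [(_ * _) * (1 + d0 ^+ 2)]mulrC [(1 + d0 ^+ 2) * _]mulrA.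
clearbody K; split=> [[g01 g12] | F0]; last first.
  by split; apply/eqP; rewrite -subr_eq0; [rewrite E01 | rewrite E12]; rewrite F0 mulr0.
apply/eqP; apply: contraT => F_neq0; exfalso; apply: not_eq3.
have cancel_KF a : a * K * defect d0 d1 d2 x e = 0 -> a = 0.
  by move/eqP; rewrite !mulf_eq0 (negbTE K_neq0) (negbTE F_neq0) !orbF => /eqP.
have /cancel_KF/subr0_eq d02 : (d0 - d2) * K * defect d0 d1 d2 x e = 0 by rewrite -E01 g01 subrr.
have /cancel_KF/subr0_eq d10 : (d1 - d0) * K * defect d0 d1 d2 x e = 0 by rewrite -E12 g12 subrr.
by rewrite d10 d02.
Qed.

End Algebra.

Section Minkowski.
Variable R : rcfType.
Implicit Types u v w : 'rV[R]_3.

Lemma lorE u v : lor u v = - (u 0 0 * v 0 0) + u 0 1 * v 0 1 + u 0 2 * v 0 2.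
Proof.
rewrite /lor !big_ord_recr big_ord0 /= /Jsign /=.
have -> : widen_ord (leqnSn 2) (widen_ord (leqnSn 1) ord_max) = 0 :> 'I_3 by apply/val_inj.
have -> : widen_ord (leqnSn 2) ord_max = 1 :> 'I_3 by apply/val_inj.
have -> : ord_max = 2 :> 'I_3 by apply/val_inj.
by ring.
Qed.

Lemma lorZ (a b : R) u v : lor (a *: u) (b *: v) = a * b * lor u v.
Proof. by rewrite !lorE !mxE; ring. Qed.

Lemma lor_lcross_cycle u v w : lor (lcross u v) w = lor (lcross v w) u.
Proof. by rewrite !lorE !mxE /Jsign /= !ord3_addE; ring. Qed.

Lemma lorH_le u v : inH u -> inH v -> lor u v <= -1.
Proof.
have sqr0E w : inH w -> w 0 0 ^+ 2 = 1 + w 0 1 ^+ 2 + w 0 2 ^+ 2.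
  by case; rewrite lorE !expr2 => ? _; lra.
move=> Hu Hv; rewrite lorE.
have uv_gt0 : 0 < u 0 0 * v 0 0 by rewrite mulr_gt0 // (lt_le_trans ltr01) ?(Hu.2, Hv.2).
have lagrange : (u 0 0 * v 0 0) ^+ 2 - (1 + u 0 1 * v 0 1 + u 0 2 * v 0 2) ^+ 2
    = (u 0 1 - v 0 1) ^+ 2 + (u 0 2 - v 0 2) ^+ 2 + (u 0 1 * v 0 2 - u 0 2 * v 0 1) ^+ 2.
  by rewrite exprMn sqr0E // sqr0E //; ring.
have : 0 <= (u 0 0 * v 0 0) ^+ 2 - (1 + u 0 1 * v 0 1 + u 0 2 * v 0 2) ^+ 2.
  by rewrite lagrange !addr_ge0 ?sqr_ge0.
move: uv_gt0; set p := u 0 0 * v 0 0; set q := 1 + _ + _ => p_gt0 pq.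
suff : q <= p by rewrite /q; lra.
nra.
Qed.

Lemma lor_bisector u v w (d f e : R) : lor w w = -1 -> e ^+ 2 = 1 ->
  lor (d *: (v + w) + e *: lcross v w) (f *: (w + u) + e *: lcross w u) =
  d * f * (-1 + lor u v + lor v w + lor w u) + e * (d + f) * lor (lcross u v) w
  - lor u v - lor v w * lor w u.
Proof.
move=> ww_N1 e2.
transitivity (d * f * (lor w w + lor u v + lor v w + lor w u)
  + e * (d + f) * lor (lcross u v) w + e ^+ 2 * (lor w w * lor u v - lor v w * lor w u)).
  by rewrite !lorE !mxE /Jsign /= !ord3_addE; ring.
by rewrite ww_N1 e2; ring.
Qed.

Section Triangle.
Variable P : 'I_3 -> 'rV[R]_3.

Definition side (i : 'I_3) : R := lor (P (i + 1)) (P (i + 2)).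

Lemma equilateral_side : equilateral P <-> side 2 = side 0 /\ side 0 = side 1.
Proof. by rewrite /side !ord3_addE. Qed.

Lemma alpha_side : alpha P = -1 + side 0 + side 1 + side 2.
Proof. by rewrite /alpha /side !ord3_addE; ring. Qed.

Lemma chi_cycle i : chi P = lor (lcross (P i) (P (i + 1))) (P (i + 2)).
Proof.
by case: (ord3P i) => ->; rewrite /chi !ord3_addE // lor_lcross_cycle // lor_lcross_cycle.
Qed.

Hypothesis P_inH : forall i, inH (P i).

Lemma side_dd i : side i = side_of (dd P i).
Proof.
have side_le : side i <= -1 by apply: lorH_le.
by rewrite /side_of /dd -/(side i) sqr_sqrtr; [field | lra].
Qed.

Lemma lor_Rpt (eps : R) i : eps ^+ 2 = 1 ->
  lor (Rpt eps P i) (Rpt eps P (i + 1)) =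
  gram (dd P i) (dd P (i + 1)) (dd P (i + 2)) (chi P) eps.
Proof.
move=> eps2; have [e11 e12 e21 e22] := ord3_shiftE i.
rewrite /Rpt e11 e12 lorZ lor_bisector ?(P_inH (i + 2)).1 //.
rewrite /gram -!side_dd /side e11 e12 e21 e22 -(chi_cycle i).
rewrite -invfM mulrACA -expr2 sqr_sqrtr ?ler0n // mulrA; congr (_ * _); ring.
Qed.

End Triangle.

End Minkowski.

Theorem corollary4p2 (R : rcfType) (P : 'I_3 -> 'rV[R]_3) (eps : R)
  (hH : forall i, inH (P i))
  (h01 : P 0 <> P 1) (h12 : P 1 <> P 2) (h20 : P 2 <> P 0)
  (hne : ~ equilateral P)
  (heps : eps = 1 \/ eps = -1) :
  equilateral (Rpt eps P) <->
  alpha P * (dd P 0 + dd P 1 + dd P 2 - dd P 0 * dd P 1 * dd P 2)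
  + eps * chi P * (1 - dd P 0 * dd P 1 - dd P 1 * dd P 2 - dd P 2 * dd P 0) = 0.
Proof.
have eps2 : eps ^+ 2 = 1 by case: heps => ->; rewrite ?sqrrN expr1n.
have not_eq3 : ~ (dd P 0 = dd P 1 /\ dd P 1 = dd P 2).
  by move=> [d01 d12]; apply: hne; rewrite equilateral_side !(side_dd hH) d01 d12.
have R01 := lor_Rpt hH 0 eps2; have R12 := lor_Rpt hH 1 eps2; have R20 := lor_Rpt hH 2 eps2.
rewrite !ord3_addE in R01 R12 R20.
rewrite /equilateral R01 R12 R20 alpha_side !(side_dd hH).
exact: gram_cycle_eq.
Qed.
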